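(* Suppose $X$ has well-defined scattered $\Pi_1$-products, $\kappa$ is a countable limit ordinal, and $\{A_\lambda\}_{\lambda<\kappa}$ is a transfinite sequence of homotopy cut-sets for paths $\alpha,\beta:[0,1]\to X$ such that (1) $A_{\lambda+1}\subseteq A_\lambda$ for all $\lambda<\kappa$; (2) $A_\lambda=\bigcap_{\mu<\lambda}A_\mu$ for every limit ordinal $\lambda<\kappa$; (3) whenever $(c,d)\in\mathcal{I}(A_{\lambda+1})$ contains $(a,b)\in\mathcal{I}(A_\lambda)$, we have $\alpha|_{[c,a]}\simeq\beta|_{[c,a]}$ if $c<a$ and $\alpha|_{[b,d]}\simeq\beta|_{[b,d]}$ if $b<d$. Then $A_\kappa=\bigcap_{\lambda<\kappa}A_\lambda$ is a homotopy cut-set for $\alpha$ and $\beta$.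
   Context: $\simeq$ is path-homotopy. For a compact set $A\subseteq\mathbb{R}$, $\mathcal{I}(A)$ is the set of connected components of $[\min A,\max A]\setminus A$. For paths $\alpha,\beta:[s,t]\to X$, a set $A\subseteq[s,t]$ is a homotopy cut-set for $\alpha,\beta$ if $A$ is closed, nowhere dense, contains $\{s,t\}$, $\alpha|_A=\beta|_A$, and $\alpha|_{[a,b]}\simeq\beta|_{[a,b]}$ for every $(a,b)\in\mathcal{I}(A)$. $X$ has well-defined scattered $\Pi_1$-products if any two paths $[0,1]\to X$ admitting a scattered homotopy cut-set are path-homotopic. *)

From Stdlib Require Import Reals.
Open Scope R_scope.

Record TopSpace := {
  carrier :> Type;
  is_open : (carrier -> Prop) -> Prop;
  open_full : is_open (fun _ => True);
  open_inter : forall U V, is_open U -> is_open V -> is_open (fun x => U x /\ V x);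
  open_union : forall F : (carrier -> Prop) -> Prop,
      (forall U, F U -> is_open U) -> is_open (fun x => exists U, F U /\ U x)
}.

Definition in_int (s t x : R) : Prop := s <= x <= t.

(** A path [s,t] -> X is (the restriction to [s,t] of) a map R -> X that is
    continuous on [s,t] (subspace topology). *)
Definition is_path {X : TopSpace} (s t : R) (f : R -> X) : Prop :=
  s <= t /\
  forall U, is_open X U -> forall x, in_int s t x -> U (f x) ->
    exists d, d > 0 /\ forall y, in_int s t y -> Rabs (y - x) < d -> U (f y).

Definition path_homotopic {X : TopSpace} (s t : R) (alpha beta : R -> X) : Prop :=
  is_path s t alpha /\ is_path s t beta /\
  exists H : R -> R -> X,
    (forall U, is_open X U -> forall x u, in_int s t x -> in_int 0 1 u -> U (H x u) ->
       exists d, d > 0 /\ forall y v, in_int s t y -> in_int 0 1 v ->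
         Rabs (y - x) < d -> Rabs (v - u) < d -> U (H y v)) /\
    (forall x, in_int s t x -> H x 0 = alpha x /\ H x 1 = beta x) /\
    (forall u, in_int 0 1 u -> H s u = alpha s /\ H t u = alpha t).

Definition closed_set (A : R -> Prop) : Prop :=
  forall x, ~ A x -> exists e, e > 0 /\ forall y, Rabs (y - x) < e -> ~ A y.

Definition nowhere_dense (A : R -> Prop) : Prop :=
  forall x y, x < y -> exists c d, x <= c /\ c < d /\ d <= y /\
    forall z, c < z < d -> ~ A z.

Definition scattered (A : R -> Prop) : Prop :=
  forall B : R -> Prop, (forall x, B x -> A x) -> (exists x, B x) ->
    exists x, B x /\ exists e, e > 0 /\ forall y, B y -> Rabs (y - x) < e -> y = x.

(** (a,b) is an element of I(A): a connected component of
    [min A, max A] \ A, i.e. a maximal open gap of A with a < b, a, b in A. *)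
Definition I_comp (A : R -> Prop) (a b : R) : Prop :=
  A a /\ A b /\ a < b /\ forall x, a < x < b -> ~ A x.

Definition homotopy_cut_set {X : TopSpace} (s t : R) (alpha beta : R -> X)
    (A : R -> Prop) : Prop :=
  (forall x, A x -> in_int s t x) /\
  closed_set A /\ nowhere_dense A /\ A s /\ A t /\
  (forall x, A x -> alpha x = beta x) /\
  (forall a b, I_comp A a b -> path_homotopic a b alpha beta).

Definition well_defined_scattered_products (X : TopSpace) : Prop :=
  forall alpha beta : R -> X, is_path 0 1 alpha -> is_path 0 1 beta ->
    (exists A, scattered A /\ homotopy_cut_set 0 1 alpha beta A) ->
    path_homotopic 0 1 alpha beta.

(** Ordinals below kappa, represented by a well-ordered index type. *)
Definition countable_limit_ordinal (I : Type) (lt : I -> I -> Prop) : Prop :=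
  (forall i, ~ lt i i) /\
  (forall i j k, lt i j -> lt j k -> lt i k) /\
  (forall i j, lt i j \/ i = j \/ lt j i) /\
  well_founded lt /\
  (exists f : I -> nat, forall i j, f i = f j -> i = j) /\
  (exists i : I, True) /\
  (forall i, exists j, lt i j).

Definition is_succ {I : Type} (lt : I -> I -> Prop) (l m : I) : Prop :=
  lt l m /\ forall n, ~ (lt l n /\ lt n m).

Definition is_limit {I : Type} (lt : I -> I -> Prop) (l : I) : Prop :=
  (exists m, lt m l) /\ forall m, lt m l -> exists n, lt m n /\ lt n l.

(* Let (a, b) be a gap of the intersection. Some A l1 misses the midpoint, so it has a gap
   (a0, b0) inside (a, b). For every n let e n be the last point of A n in [a, a0] and - f n
   the first point of A n in [b0, b]. As n grows, e n decreases to a, and it is continuous at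
   limit indices: e r is the infimum of the e t, t < r, because the A t are closed. Hence {a}
   together with the e n is closed and scattered, and its gaps are the intervals
   (e (t+1), e t) with t >= l1; symmetrically on the right. On each of these, alpha and beta
   are homotopic by hypothesis (3) applied to the gap (e t, - f t) of A t inside the gap
   (e (t+1), - f (t+1)) of A (t+1), and on (a0, b0) because A l1 is a cut-set. So the two
   ladders form a scattered homotopy cut-set on [a, b], and well-defined scattered products,
   rescaled from [0, 1] to [a, b], give the homotopy. Countability of the index is not used. *)

From Stdlib Require Import Reals Lra Classical FunctionalExtensionality IndefiniteDescription.
Open Scope R_scope.

Lemma Rabs_sub_lt_iff x y e : Rabs (y - x) < e <-> x - e < y < x + e.
Proof. split; intro H. - apply Rabs_def2 in H; lra. - apply Rabs_def1; lra. Qed.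

Definition similarity (k : R) (phi : R -> R) : Prop :=
  forall x y, Rabs (phi x - phi y) = k * Rabs (x - y).

Lemma similarity_affine k m : 0 < k -> similarity k (fun x => k * x + m).
Proof.
  intros hk x y. replace (k * x + m - (k * y + m)) with (k * (x - y)) by ring.
  rewrite Rabs_mult, Rabs_right; lra.
Qed.

Lemma similarity_opp : similarity 1 Ropp.
Proof.
  intros x y. replace (- x - - y) with (- (x - y)) by ring. rewrite Rabs_Ropp. ring.
Qed.

Lemma similarity_lt k phi x y e :
  0 < k -> similarity k phi -> Rabs (x - y) < e / k -> Rabs (phi x - phi y) < e.
Proof.
  intros hk hphi hxy. rewrite hphi.
  apply Rmult_lt_compat_l with (r := k) in hxy; [|exact hk].
  replace (k * (e / k)) with e in hxy by (field; lra). exact hxy.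
Qed.

Lemma closed_set_similarity k phi B :
  0 < k -> similarity k phi -> closed_set B -> closed_set (fun x => B (phi x)).
Proof.
  intros hk hphi HB x Hx. destruct (HB (phi x) Hx) as [e [He He']].
  exists (e / k). split; [apply Rdiv_lt_0_compat; lra|].
  intros y Hy. apply He'. exact (similarity_lt k phi y x e hk hphi Hy).
Qed.

Lemma scattered_similarity k phi B :
  0 < k -> similarity k phi -> scattered B -> scattered (fun x => B (phi x)).
Proof.
  intros hk hphi HB C HC [x0 Hx0].
  destruct (HB (fun z => exists x, C x /\ z = phi x)) as [z [[x [Cx ->]] [e [He He']]]].
  { intros z [x [Cx ->]]. exact (HC x Cx). }
  { exists (phi x0), x0. auto. }
  exists x. split; [exact Cx|]. exists (e / k). split; [apply Rdiv_lt_0_compat; lra|].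
  intros y Cy Hy.
  assert (Hphi : phi y = phi x).
  { apply He'; [exists y; auto|]. exact (similarity_lt k phi y x e hk hphi Hy). }
  assert (Habs := hphi y x). rewrite Hphi, Rminus_diag, Rabs_R0 in Habs.
  destruct (Req_dec y x) as [Eyx|hne]; [exact Eyx|].
  assert (0 < Rabs (y - x)) by (apply Rabs_pos_lt; lra). nra.
Qed.

Lemma closed_set_union B C : closed_set B -> closed_set C -> closed_set (fun x => B x \/ C x).
Proof.
  intros HB HC x Hx.
  destruct (HB x (fun h => Hx (or_introl h))) as [e1 [He1 He1']].
  destruct (HC x (fun h => Hx (or_intror h))) as [e2 [He2 He2']].
  exists (Rmin e1 e2). split; [apply Rmin_pos; lra|].
  intros y Hy [By|Cy].
  - apply (He1' y); [|exact By]. eapply Rlt_le_trans; [exact Hy|apply Rmin_l].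
  - apply (He2' y); [|exact Cy]. eapply Rlt_le_trans; [exact Hy|apply Rmin_r].
Qed.

Lemma closed_set_inter {J : Type} (B : J -> R -> Prop) :
  (forall j, closed_set (B j)) -> closed_set (fun x => forall j, B j x).
Proof.
  intros HB x Hx. apply not_all_ex_not in Hx as [j Hj].
  destruct (HB j x Hj) as [e [He He']]. exists e. split; [exact He|].
  intros y Hy Hy'. exact (He' y Hy (Hy' j)).
Qed.

Lemma nowhere_dense_sub B C : (forall x, C x -> B x) -> nowhere_dense B -> nowhere_dense C.
Proof.
  intros HCB HB x y hxy. destruct (HB x y hxy) as [c [d [h1 [h2 [h3 h4]]]]].
  exists c, d. repeat split; auto. intros z hz Cz. exact (h4 z hz (HCB z Cz)).
Qed.

Lemma I_comp_sub B C p q :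
  (forall x, C x -> B x) -> C p -> C q -> I_comp B p q -> I_comp C p q.
Proof.
  intros HCB Cp Cq [_ [_ [hpq Hgap]]]. repeat split; try assumption.
  intros z hz Cz. exact (Hgap z hz (HCB z Cz)).
Qed.

Lemma I_comp_opp B p q : I_comp B p q -> I_comp (fun x => B (- x)) (- q) (- p).
Proof.
  intros [Bp [Bq [hpq Hgap]]]. unfold I_comp. rewrite !Ropp_involutive.
  repeat split; try assumption; [lra|]. intros z hz. apply Hgap. lra.
Qed.

Lemma scattered_union_separated B C u v :
  scattered B -> scattered C -> (forall x, B x -> x <= u) -> (forall x, C x -> v <= x) ->
  u < v -> scattered (fun x => B x \/ C x).
Proof.
  intros HB HC Bu Cv huv D HD [x0 Dx0].
  destruct (classic (exists x, D x /\ B x)) as [[x1 Hx1]|noB].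
  - destruct (HB (fun x => D x /\ B x)) as [x [[Dx Bx] [e [He He']]]]; [tauto|eauto|].
    exists x. split; [exact Dx|]. exists (Rmin e (v - u)). split; [apply Rmin_pos; lra|].
    intros y Dy Hy. pose proof (Rmin_l e (v - u)). pose proof (Rmin_r e (v - u)).
    destruct (HD y Dy) as [By|Cy].
    + apply He'; [tauto|lra].
    + apply Bu in Bx. apply Cv in Cy. apply Rabs_sub_lt_iff in Hy. lra.
  - assert (DC : forall x, D x -> C x).
    { intros x Dx. destruct (HD x Dx) as [Bx|Cx]; [|exact Cx].
      exfalso. exact (noB (ex_intro _ x (conj Dx Bx))). }
    exact (HC D DC (ex_intro _ x0 Dx0)).
Qed.

Lemma is_path_sub {X : TopSpace} s t a b (f : R -> X) :
  s <= a -> a <= b -> b <= t -> is_path s t f -> is_path a b f.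
Proof.
  intros hsa hab hbt [_ Hf]. split; [exact hab|]. intros U HU x Hx HUx.
  destruct (Hf U HU x) as [d [Hd Hd']]; [unfold in_int in *; lra|exact HUx|].
  exists d. split; [exact Hd|]. intros y Hy Hyx. apply Hd'; [unfold in_int in *; lra|exact Hyx].
Qed.

Section Affine.
Variables k m : R.
Hypothesis k_pos : 0 < k.

Lemma affine_le_iff x y : k * x + m <= k * y + m <-> x <= y.
Proof. split; intro h; nra. Qed.

Lemma affine_lt_iff x y : k * x + m < k * y + m <-> x < y.
Proof. split; intro h; nra. Qed.

Lemma affine_preimage z : exists x, z = k * x + m.
Proof. exists ((z - m) / k). field. lra. Qed.

Lemma in_int_affine s t x : in_int (k * s + m) (k * t + m) (k * x + m) <-> in_int s t x.
Proof. unfold in_int. rewrite !affine_le_iff. tauto. Qed.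

Lemma is_path_affine {X : TopSpace} s t (f : R -> X) :
  is_path (k * s + m) (k * t + m) f -> is_path s t (fun x => f (k * x + m)).
Proof.
  intros [hst Hf]. split; [apply affine_le_iff; exact hst|].
  intros U HU x Hx HUx.
  destruct (Hf U HU (k * x + m)) as [d [Hd Hd']]; [apply in_int_affine; exact Hx|exact HUx|].
  exists (d / k). split; [apply Rdiv_lt_0_compat; lra|].
  intros y Hy Hyx. apply Hd'; [apply in_int_affine; exact Hy|].
  exact (similarity_lt k _ y x d k_pos (similarity_affine k m k_pos) Hyx).
Qed.

Lemma path_homotopic_affine {X : TopSpace} s t (f g : R -> X) :
  path_homotopic (k * s + m) (k * t + m) f g ->
  path_homotopic s t (fun x => f (k * x + m)) (fun x => g (k * x + m)).
Proof.
  intros [pf [pg [H [HC [H0 H1]]]]].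
  split; [apply is_path_affine; exact pf|]. split; [apply is_path_affine; exact pg|].
  exists (fun x u => H (k * x + m) u). split; [|split].
  - intros U HU x u Hx Hu HUx.
    destruct (HC U HU (k * x + m) u) as [d [Hd Hd']];
      [apply in_int_affine; exact Hx|exact Hu|exact HUx|].
    exists (Rmin (d / k) d). split; [apply Rmin_pos; [apply Rdiv_lt_0_compat|]; lra|].
    intros y v Hy Hv Hyx Hvu. apply Hd'; [apply in_int_affine; exact Hy|exact Hv| |].
    + apply (similarity_lt k _ y x d k_pos (similarity_affine k m k_pos)).
      eapply Rlt_le_trans; [exact Hyx|apply Rmin_l].
    + eapply Rlt_le_trans; [exact Hvu|apply Rmin_r].
  - intros x Hx. apply H0. apply in_int_affine; exact Hx.
  - intros u Hu. apply H1; exact Hu.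
Qed.

Lemma homotopy_cut_set_affine {X : TopSpace} s t (alpha beta : R -> X) S :
  homotopy_cut_set (k * s + m) (k * t + m) alpha beta S ->
  homotopy_cut_set s t (fun x => alpha (k * x + m)) (fun x => beta (k * x + m))
    (fun x => S (k * x + m)).
Proof.
  intros [Sint [Scl [Snd [Ss [St [Sagree Sgaps]]]]]].
  split; [|split; [|split; [|split; [|split; [|split]]]]].
  - intros x Sx. apply in_int_affine. exact (Sint _ Sx).
  - exact (closed_set_similarity k _ S k_pos (similarity_affine k m k_pos) Scl).
  - intros x y hxy. rewrite <- (affine_lt_iff x y) in hxy.
    destruct (Snd _ _ hxy) as [c [d [h1 [h2 [h3 h4]]]]].
    destruct (affine_preimage c) as [c' ->]. destruct (affine_preimage d) as [d' ->].
    rewrite affine_le_iff in h1, h3. rewrite affine_lt_iff in h2.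
    exists c', d'. repeat split; try assumption.
    intros z hz. apply h4. rewrite !affine_lt_iff. exact hz.
  - exact Ss.
  - exact St.
  - intros x Sx. exact (Sagree _ Sx).
  - intros p q [Sp [Sq [hpq Hpq]]]. apply path_homotopic_affine, Sgaps.
    repeat split; try assumption; [apply affine_lt_iff; exact hpq|].
    intros z hz. destruct (affine_preimage z) as [z' ->].
    rewrite !affine_lt_iff in hz. exact (Hpq z' hz).
Qed.
End Affine.

Lemma scattered_products_on {X : TopSpace} (alpha beta : R -> X) S s t :
  well_defined_scattered_products X -> s < t -> is_path s t alpha -> is_path s t beta ->
  scattered S -> homotopy_cut_set s t alpha beta S -> path_homotopic s t alpha beta.
Proof.
  intros W hst pa pb HS Hcut.
  set (k := t - s). assert (hk : 0 < k) by (unfold k; lra).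
  assert (E0 : k * 0 + s = s) by ring. assert (E1 : k * 1 + s = t) by (unfold k; ring).
  assert (P : path_homotopic 0 1 (fun x => alpha (k * x + s)) (fun x => beta (k * x + s))).
  { apply W; [| |exists (fun x => S (k * x + s)); split].
    - apply is_path_affine; [exact hk|]. rewrite E0, E1. exact pa.
    - apply is_path_affine; [exact hk|]. rewrite E0, E1. exact pb.
    - exact (scattered_similarity k _ S hk (similarity_affine k s hk) HS).
    - apply homotopy_cut_set_affine; [exact hk|]. rewrite E0, E1. exact Hcut. }
  assert (hk' : 0 < / k) by (apply Rinv_0_lt_compat; exact hk).
  replace 0 with (/ k * s + - s / k) in P by (field; lra).
  replace 1 with (/ k * t + - s / k) in P by (unfold k; field; lra).
  apply (path_homotopic_affine (/ k) (- s / k) hk') in P.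
  assert (Hinv : forall x, k * (/ k * x + - s / k) + s = x) by (intro x; field; lra).
  replace alpha with (fun x => alpha (k * (/ k * x + - s / k) + s))
    by (apply functional_extensionality; intro x; rewrite Hinv; reflexivity).
  replace beta with (fun x => beta (k * (/ k * x + - s / k) + s))
    by (apply functional_extensionality; intro x; rewrite Hinv; reflexivity).
  exact P.
Qed.

Lemma closed_last_point (B : R -> Prop) c p : closed_set B -> B c -> c <= p ->
  exists x, B x /\ c <= x <= p /\ forall y, x < y -> y <= p -> ~ B y.
Proof.
  intros HB Bc hcp.
  destruct (completeness (fun y => B y /\ y <= p)) as [x [Hub Hlub]].
  { exists p. intros y [_ hy]. exact hy. }
  { exists c. auto. }
  assert (hxp : x <= p) by (apply Hlub; intros y [_ hy]; exact hy).
  assert (hcx : c <= x) by (apply Hub; auto).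
  exists x. split; [|split; [lra|]].
  - apply NNPP. intro nBx. destruct (HB x nBx) as [e [He He']].
    assert (~ is_upper_bound (fun y => B y /\ y <= p) (x - e)) as Hnub
      by (intro Hu; apply Hlub in Hu; lra).
    apply not_all_ex_not in Hnub as [y Hy]. apply imply_to_and in Hy as [[By hyp] hy].
    assert (y <= x) by (apply Hub; auto).
    apply (He' y); [apply Rabs_sub_lt_iff; lra|exact By].
  - intros y hxy hyp By. assert (y <= x) by (apply Hub; auto). lra.
Qed.

Lemma closed_gap_around (B : R -> Prop) a b x :
  closed_set B -> B a -> B b -> a < x < b -> ~ B x ->
  exists a0 b0, I_comp B a0 b0 /\ a <= a0 < x /\ x < b0 <= b.
Proof.
  intros HB Ba Bb hx nBx.
  destruct (closed_last_point B a x) as [a0 [Ba0 [ha0 Ha0]]]; [exact HB|exact Ba|lra|].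
  destruct (closed_last_point (fun y => B (- y)) (- b) (- x)) as [b0 [Bb0 [hb0 Hb0]]].
  { exact (closed_set_similarity 1 Ropp B Rlt_0_1 similarity_opp HB). }
  { rewrite Ropp_involutive. exact Bb. }
  { lra. }
  assert (a0 <> x) by (intro; subst; contradiction).
  assert (b0 <> - x) by (intro; subst; rewrite Ropp_involutive in Bb0; contradiction).
  exists a0, (- b0). repeat split; try lra; try exact Ba0; try exact Bb0.
  intros z hz Bz. destruct (Rle_or_lt z x).
  - apply (Ha0 z); [lra|lra|exact Bz].
  - apply (Hb0 (- z)); [lra|lra|rewrite Ropp_involutive; exact Bz].
Qed.

Section Ordinals.
Variables (I : Type) (lt : I -> I -> Prop).
Hypothesis lt_irrefl : forall i, ~ lt i i.
Hypothesis lt_trans : forall i j k, lt i j -> lt j k -> lt i k.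
Hypothesis lt_total : forall i j, lt i j \/ i = j \/ lt j i.
Hypothesis lt_wf : well_founded lt.

Definition le i j := lt i j \/ i = j.

Lemma exists_least (P : I -> Prop) : (exists i, P i) -> exists i, P i /\ forall j, P j -> le i j.
Proof.
  intros [i0 Pi0]. apply NNPP. intro Hn.
  assert (nP : forall i, ~ P i); [|exact (nP i0 Pi0)].
  intro i. induction i as [i IH] using (well_founded_ind lt_wf). intro Pi.
  apply Hn. exists i. split; [exact Pi|]. intros j Pj.
  destruct (lt_total i j) as [h|[h|h]]; [left; exact h|right; exact h|].
  exact (False_ind _ (IH j h Pj)).
Qed.

Lemma not_lt_le i j : ~ lt j i -> le i j.
Proof. intro h. destruct (lt_total i j) as [h'|[h'|h']]; [left|right|]; tauto. Qed.

Lemma le_not_lt i j : le i j -> ~ lt j i.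
Proof. intros [h|<-] h'; [exact (lt_irrefl i (lt_trans _ _ _ h h'))|exact (lt_irrefl i h')]. Qed.

Lemma succ_or_limit r : (exists m, lt m r) -> (exists t, is_succ lt t r) \/ is_limit lt r.
Proof.
  intros Hm. destruct (classic (is_limit lt r)) as [h|h]; [right; exact h|left].
  apply not_and_or in h as [h|h]; [contradiction|].
  apply not_all_ex_not in h as [m h]. apply imply_to_and in h as [hm h].
  exists m. split; [exact hm|]. intros n [hn1 hn2]. apply h. exists n. auto.
Qed.

Lemma le_of_lt_succ t r p : is_succ lt t r -> lt p r -> le p t.
Proof. intros [_ h] hp. apply not_lt_le. intro h'. exact (h p (conj h' hp)). Qed.

Lemma exists_max i j : exists k, le i k /\ le j k /\ (k = i \/ k = j).
Proof.
  destruct (lt_total i j) as [h|[h|h]].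
  - exists j. unfold le. tauto.
  - exists j. unfold le. tauto.
  - exists i. unfold le. tauto.
Qed.

Record decreasing_tower (A : I -> R -> Prop) : Prop := {
  tower_closed : forall n, closed_set (A n);
  tower_anti : forall s t x, le s t -> A t x -> A s x;
  tower_limit : forall r, is_limit lt r -> forall x, (forall t, lt t r -> A t x) -> A r x }.
Arguments tower_closed {A}.
Arguments tower_anti {A}.
Arguments tower_limit {A}.

Lemma decreasing_tower_intro (A : I -> R -> Prop) :
  (forall n, closed_set (A n)) ->
  (forall l m, is_succ lt l m -> forall x, A m x -> A l x) ->
  (forall l, is_limit lt l -> forall x, A l x <-> (forall m, lt m l -> A m x)) ->
  decreasing_tower A.
Proof.
  intros Acl Asucc Alim. split; [exact Acl| |intros r hr x; apply Alim, hr].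
  intros s t x. revert s. induction t as [t IH] using (well_founded_ind lt_wf).
  intros s [hst| ->] At; [|exact At].
  destruct (succ_or_limit t) as [[p hp]|hl]; [exists s; exact hst| |].
  - apply (IH p (proj1 hp)); [exact (le_of_lt_succ p t s hp hst)|exact (Asucc p t hp x At)].
  - exact (proj1 (Alim t hl x) At s hst).
Qed.

Lemma decreasing_tower_opp (A : I -> R -> Prop) :
  decreasing_tower A -> decreasing_tower (fun n x => A n (- x)).
Proof.
  intros [Acl Aanti Alim]. split.
  - intro n. exact (closed_set_similarity 1 Ropp (A n) Rlt_0_1 similarity_opp (Acl n)).
  - intros s t x. apply Aanti.
  - intros r hr x. apply Alim, hr.
Qed.

Definition ladder (a : R) (e : I -> R) (x : R) : Prop := x = a \/ exists n, x = e n.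

Record last_points (A : I -> R -> Prop) (a : R) (n0 : I) (e : I -> R) : Prop := {
  lp_base : forall n, A n a;
  lp_no_common : forall x, (forall n, A n x) -> a < x -> x <= e n0 -> False;
  lp_mem : forall n, A n (e n);
  lp_range : forall n, a <= e n <= e n0;
  lp_last : forall n y, e n < y -> y <= e n0 -> ~ A n y }.
Arguments lp_base {A a n0 e}.
Arguments lp_no_common {A a n0 e}.
Arguments lp_mem {A a n0 e}.
Arguments lp_range {A a n0 e}.
Arguments lp_last {A a n0 e}.

Lemma last_points_exist (A : I -> R -> Prop) a p n0 :
  decreasing_tower A -> (forall n, A n a) -> a <= p -> A n0 p ->
  (forall x, (forall n, A n x) -> a < x -> x <= p -> False) ->
  exists e, last_points A a n0 e /\ e n0 = p.
Proof.
  intros HA Aa hap Ap Hnone.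
  destruct (functional_choice (fun n y => A n y /\ a <= y <= p /\
                                 forall z, y < z -> z <= p -> ~ A n z)) as [e He].
  { intro n. exact (closed_last_point (A n) a p (tower_closed HA n) (Aa n) hap). }
  assert (Ep : e n0 = p).
  { destruct (He n0) as [_ [[_ h] Hlast]].
    destruct (Rle_lt_or_eq_dec _ _ h) as [h'|h']; [|exact h'].
    exfalso. exact (Hlast p h' (Rle_refl p) Ap). }
  exists e. split; [|exact Ep].
  split; rewrite ?Ep; [exact Aa|exact Hnone|apply He|apply He|apply He].
Qed.

Section Ladder.
Context {A : I -> R -> Prop} {a : R} {n0 : I} {e : I -> R}.
Hypothesis HA : decreasing_tower A.
Hypothesis He : last_points A a n0 e.

Lemma ladder_anti s t : le s t -> e t <= e s.
Proof.
  intro hst. apply Rnot_lt_le. intro h.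
  apply (lp_last He s (e t) h (proj2 (lp_range He t))).
  exact (tower_anti HA s t _ hst (lp_mem He t)).
Qed.

(* The witness is the infimum of the [e t], [t] in [D]; directedness puts it in every [A t]. *)
Lemma ladder_inf_mem (D : I -> Prop) : (exists t, D t) ->
  (forall s t, D s -> D t -> exists u, D u /\ le s u /\ le t u) ->
  forall x, (forall t, D t -> x <= e t) ->
  exists m, x <= m <= e n0 /\ forall t, D t -> A t m.
Proof.
  intros [t0 Dt0] Hdir x Hx.
  destruct (completeness (fun y => exists t, D t /\ y = - e t)) as [M [Hub Hlub]].
  { exists (- x). intros y [t [Dt ->]]. specialize (Hx t Dt). lra. }
  { exists (- e t0). eauto. }
  assert (HM : forall t, D t -> - M <= e t).
  { intros t Dt. assert (- e t <= M) by (apply Hub; eauto). lra. }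
  exists (- M). split; [split|].
  - assert (M <= - x); [|lra]. apply Hlub. intros y [t [Dt ->]]. specialize (Hx t Dt). lra.
  - specialize (HM t0 Dt0). pose proof (lp_range He t0). lra.
  - intros s Ds. apply NNPP. intro nAs.
    destruct (tower_closed HA s (- M) nAs) as [eps [Heps Heps']].
    assert (~ is_upper_bound (fun y => exists t, D t /\ y = - e t) (M - eps)) as Hnub
      by (intro Hu; apply Hlub in Hu; lra).
    apply not_all_ex_not in Hnub as [y Hy]. apply imply_to_and in Hy as [[t [Dt ->]] hy].
    destruct (Hdir s t Ds Dt) as [u [Du [hsu htu]]].
    pose proof (ladder_anti t u htu). pose proof (HM u Du).
    apply (Heps' (e u)); [apply Rabs_sub_lt_iff; lra|].
    exact (tower_anti HA s u _ hsu (lp_mem He u)).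
Qed.

Lemma ladder_approaches_base x : a < x -> exists t, e t < x.
Proof.
  intro hx. apply NNPP. intro Hn.
  assert (Hge : forall t, x <= e t) by (intro t; apply Rnot_lt_le; intro h; apply Hn; eauto).
  destruct (ladder_inf_mem (fun _ => True)) with (x := x) as [m [hm Am]].
  - exists n0. trivial.
  - intros s t _ _. destruct (exists_max s t) as [u [hsu [htu _]]]. exists u. auto.
  - auto.
  - apply (lp_no_common He m); [intro n; apply Am; trivial|lra|lra].
Qed.

Lemma ladder_limit r : is_limit lt r -> forall x, (forall t, lt t r -> x <= e t) -> x <= e r.
Proof.
  intros hr x Hx.
  destruct (ladder_inf_mem (fun t => lt t r)) with (x := x) as [m [hm Am]].
  - exact (proj1 hr).
  - intros s t hs ht. destruct (exists_max s t) as [u [hsu [htu [Eu|Eu]]]];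
      exists u; (split; [rewrite Eu; assumption|auto]).
  - exact Hx.
  - apply Rnot_lt_le. intro h.
    apply (lp_last He r m); [lra|lra|exact (tower_limit HA r hr m Am)].
Qed.

Lemma first_below x : a < x -> exists r, e r < x /\ forall p, e p < x -> le r p.
Proof. intro hx. exact (exists_least (fun r => e r < x) (ladder_approaches_base x hx)). Qed.

Lemma ladder_bounds x : ladder a e x -> a <= x <= e n0.
Proof.
  pose proof (lp_range He n0).
  intros [-> | [n ->]]; [lra|exact (lp_range He n)].
Qed.

Lemma ladder_bracket x : a < x -> x <= e n0 ->
  exists t r, is_succ lt t r /\ e r < x <= e t /\ le n0 t.
Proof.
  intros hax hx. destruct (first_below x hax) as [r [hr Hr]].
  assert (Hge : forall t, lt t r -> x <= e t).
  { intros t ht. apply Rnot_lt_le. intro h. exact (le_not_lt r t (Hr t h) ht). }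
  assert (hn0r : lt n0 r).
  { apply NNPP. intro h. pose proof (ladder_anti r n0 (not_lt_le r n0 h)). lra. }
  destruct (succ_or_limit r) as [[t ht]|hl]; [exists n0; exact hn0r| |].
  - exists t, r. split; [exact ht|]. split; [split; [exact hr|exact (Hge t (proj1 ht))]|].
    exact (le_of_lt_succ t r n0 ht hn0r).
  - pose proof (ladder_limit r hl x Hge). lra.
Qed.

Lemma ladder_succ_gap t r y : is_succ lt t r -> ladder a e y -> ~ (e r < y < e t).
Proof.
  intros ht [-> | [p ->]] hy.
  - pose proof (lp_range He r). lra.
  - destruct (lt_total p r) as [h|[<-|h]].
    + pose proof (ladder_anti p t (le_of_lt_succ t r p ht h)). lra.
    + lra.
    + pose proof (ladder_anti r p (or_introl h)). lra.
Qed.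

Lemma ladder_sub x : ladder a e x -> A n0 x.
Proof.
  intros [-> | [n ->]]; [exact (lp_base He n0)|].
  destruct (lt_total n n0) as [h|[<-|h]].
  - replace (e n) with (e n0); [exact (lp_mem He n0)|].
    pose proof (ladder_anti n n0 (or_introl h)). pose proof (lp_range He n). lra.
  - exact (lp_mem He n).
  - exact (tower_anti HA n0 n _ (or_introl h) (lp_mem He n)).
Qed.

Lemma ladder_closed : closed_set (ladder a e).
Proof.
  intros x nLx.
  destruct (Rlt_or_le x a) as [h|h].
  { exists (a - x). split; [lra|]. intros y hy Ly.
    apply Rabs_sub_lt_iff in hy. pose proof (ladder_bounds y Ly). lra. }
  destruct (Rlt_or_le (e n0) x) as [h'|h'].
  { exists (x - e n0). split; [lra|]. intros y hy Ly.
    apply Rabs_sub_lt_iff in hy. pose proof (ladder_bounds y Ly). lra. }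
  assert (hax : a < x) by (destruct h as [h| ->]; [exact h|exfalso; apply nLx; left; reflexivity]).
  destruct (ladder_bracket x hax h') as [t [r [ht [[hr hxt] _]]]].
  assert (hxt' : x < e t)
    by (destruct hxt as [hxt| ->]; [exact hxt|exfalso; apply nLx; right; exists t; reflexivity]).
  exists (Rmin (x - e r) (e t - x)). split; [apply Rmin_pos; lra|].
  intros y hy Ly. apply (ladder_succ_gap t r y ht Ly).
  pose proof (Rmin_l (x - e r) (e t - x)). pose proof (Rmin_r (x - e r) (e t - x)).
  apply Rabs_sub_lt_iff in hy. lra.
Qed.

Lemma ladder_scattered : scattered (ladder a e).
Proof.
  intros B HB [x0 Bx0].
  destruct (classic (exists n, B (e n))) as [Hn|Hn].
  - destruct (exists_least (fun n => B (e n)) Hn) as [v [Bv Hv]].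
    assert (Hmax : forall y, B y -> y <= e v).
    { intros y By. destruct (HB y By) as [-> | [p ->]].
      - exact (proj1 (lp_range He v)).
      - exact (ladder_anti v p (Hv p By)). }
    exists (e v). split; [exact Bv|].
    destruct (Rle_or_lt (e v) a) as [h|h].
    + exists 1. split; [lra|]. intros y By _.
      pose proof (Hmax y By). pose proof (ladder_bounds y (HB y By)). lra.
    + destruct (first_below (e v) h) as [r [hr Hr]].
      exists (e v - e r). split; [lra|]. intros y By hy. apply Rabs_sub_lt_iff in hy.
      destruct (Rle_lt_or_eq_dec y (e v) (Hmax y By)) as [hlt|heq]; [exfalso|exact heq].
      destruct (HB y By) as [-> | [p ->]].
      * pose proof (lp_range He r). lra.
      * pose proof (ladder_anti r p (Hr p hlt)). lra.
  - assert (Ha : forall y, B y -> y = a).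
    { intros y By. destruct (HB y By) as [Ey | [p ->]]; [exact Ey|exfalso; eauto]. }
    exists x0. split; [exact Bx0|]. exists 1. split; [lra|].
    intros y By _. rewrite (Ha y By), (Ha x0 Bx0). reflexivity.
Qed.

Lemma ladder_gap p q : I_comp (ladder a e) p q ->
  exists t r, is_succ lt t r /\ le n0 t /\ p = e r /\ q = e t.
Proof.
  intros [Lp [Lq [hpq Hgap]]].
  pose proof (ladder_bounds p Lp). pose proof (ladder_bounds q Lq).
  destruct (ladder_bracket q) as [t [r [ht [[hr hqt] hn0t]]]]; [lra|lra|].
  assert (Eq : q = e t).
  { destruct Lq as [Eq | [s ->]]; [lra|].
    assert (hsr : lt s r).
    { apply NNPP. intro h. pose proof (ladder_anti r s (not_lt_le r s h)). lra. }
    pose proof (ladder_anti s t (le_of_lt_succ t r s ht hsr)). lra. }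
  assert (her : e r <= p).
  { apply Rnot_lt_le. intro h. apply (Hgap (e r)); [lra|right; exists r; reflexivity]. }
  assert (Ep : p = e r).
  { apply Rle_antisym; [|exact her]. apply Rnot_lt_le. intro h.
    apply (ladder_succ_gap t r p ht Lp). lra. }
  exists t, r. auto.
Qed.
End Ladder.

Section IntersectionGaps.
Variables (X : TopSpace) (alpha beta : R -> X) (A : I -> R -> Prop).
Hypothesis W : well_defined_scattered_products X.
Hypothesis alpha_path : is_path 0 1 alpha.
Hypothesis beta_path : is_path 0 1 beta.
Hypothesis A_cut : forall l, homotopy_cut_set 0 1 alpha beta (A l).
Hypothesis HA : decreasing_tower A.
Hypothesis succ_gaps : forall l m, is_succ lt l m -> forall a b c d,
  I_comp (A m) c d -> I_comp (A l) a b -> c <= a -> b <= d ->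
  (c < a -> path_homotopic c a alpha beta) /\ (b < d -> path_homotopic b d alpha beta).

Section TwoLadders.
Variables (a b : R) (l1 : I) (e f : I -> R).
Hypothesis He : last_points A a l1 e.
Hypothesis Hf : last_points (fun n x => A n (- x)) (- b) l1 f.
Hypothesis Hmid : I_comp (A l1) (e l1) (- f l1).

Let HA' := decreasing_tower_opp A HA.

(* The right ladder is the left construction for the reflected tower x |-> A n (- x). *)
Definition two_ladders (x : R) : Prop := ladder a e x \/ ladder (- b) f (- x).

Lemma end_gap n : le l1 n -> I_comp (A n) (e n) (- f n).
Proof.
  intro hn. pose proof Hmid as [_ [_ [hmid Hgap]]].
  pose proof (lp_range He n). pose proof (lp_range Hf n).
  split; [exact (lp_mem He n)|split; [exact (lp_mem Hf n)|split; [lra|]]].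
  intros z hz Az.
  destruct (Rle_or_lt z (e l1)) as [h|h]; [exact (lp_last He n z (proj1 hz) h Az)|].
  destruct (Rle_or_lt (- f l1) z) as [h'|h'].
  - apply (lp_last Hf n (- z)); [lra|lra|rewrite Ropp_involutive; exact Az].
  - exact (Hgap z (conj h h') (tower_anti HA l1 n z hn Az)).
Qed.

Lemma two_ladders_sub x : two_ladders x -> A l1 x.
Proof.
  intros [L|R]; [exact (ladder_sub HA He x L)|].
  rewrite <- (Ropp_involutive x). exact (ladder_sub HA' Hf (- x) R).
Qed.

Lemma two_ladders_bounds x : two_ladders x -> a <= x <= b.
Proof.
  pose proof Hmid as [_ [_ [hmid _]]].
  pose proof (lp_range He l1). pose proof (lp_range Hf l1).
  intros [L|R]; [pose proof (ladder_bounds He x L)|pose proof (ladder_bounds Hf (- x) R)]; lra.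
Qed.

Lemma two_ladders_closed : closed_set two_ladders.
Proof.
  apply closed_set_union; [exact (ladder_closed HA He)|].
  exact (closed_set_similarity 1 Ropp _ Rlt_0_1 similarity_opp (ladder_closed HA' Hf)).
Qed.

Lemma two_ladders_scattered : scattered two_ladders.
Proof.
  pose proof Hmid as [_ [_ [hmid _]]].
  apply (scattered_union_separated _ _ (e l1) (- f l1)); [| | | |exact hmid].
  - exact (ladder_scattered HA He).
  - exact (scattered_similarity 1 Ropp _ Rlt_0_1 similarity_opp (ladder_scattered HA' Hf)).
  - intros x L. exact (proj2 (ladder_bounds He x L)).
  - intros x R. pose proof (ladder_bounds Hf (- x) R). lra.
Qed.

Lemma ladder_steps_homotopic t r : is_succ lt t r -> le l1 t ->
  (e r < e t -> path_homotopic (e r) (e t) alpha beta) /\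
  (- f t < - f r -> path_homotopic (- f t) (- f r) alpha beta).
Proof.
  intros ht hl1t.
  assert (hl1r : le l1 r).
  { left. destruct hl1t as [h| <-]; [exact (lt_trans _ _ _ h (proj1 ht))|exact (proj1 ht)]. }
  pose proof (ladder_anti HA' Hf t r (or_introl (proj1 ht))).
  apply (succ_gaps t r ht (e t) (- f t) (e r) (- f r) (end_gap r hl1r) (end_gap t hl1t));
    [|lra].
  exact (ladder_anti HA He t r (or_introl (proj1 ht))).
Qed.

Lemma two_ladders_gap_homotopic p q : I_comp two_ladders p q -> path_homotopic p q alpha beta.
Proof.
  intros Hpq. pose proof Hpq as [[Lp|Rp] [[Lq|Rq] [hpq Hgap]]].
  - destruct (ladder_gap HA He p q) as [t [r [ht [hl1t [-> ->]]]]].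
    { apply (I_comp_sub two_ladders); [intros x L; left; exact L|exact Lp|exact Lq|exact Hpq]. }
    exact (proj1 (ladder_steps_homotopic t r ht hl1t) hpq).
  - assert (Hl : two_ladders (e l1)) by (left; right; exists l1; reflexivity).
    assert (Hr : two_ladders (- f l1))
      by (right; right; exists l1; rewrite Ropp_involutive; reflexivity).
    pose proof (ladder_bounds He p Lp). pose proof (ladder_bounds Hf (- q) Rq).
    pose proof Hmid as [_ [_ [hmid _]]].
    assert (Ep : p = e l1) by (apply NNPP; intro h; apply (Hgap (e l1)); [lra|exact Hl]).
    assert (Eq : q = - f l1) by (apply NNPP; intro h; apply (Hgap (- f l1)); [lra|exact Hr]).
    destruct (A_cut l1) as [_ [_ [_ [_ [_ [_ Hgaps]]]]]].
    subst. exact (Hgaps _ _ Hmid).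
  - pose proof (ladder_bounds He q Lq). pose proof (ladder_bounds Hf (- p) Rp).
    pose proof Hmid as [_ [_ [hmid _]]]. lra.
  - destruct (ladder_gap HA' Hf (- q) (- p)) as [t [r [ht [hl1t [Eq Ep]]]]].
    { apply (I_comp_sub (fun x => two_ladders (- x)));
        [|exact Rq|exact Rp|exact (I_comp_opp _ _ _ Hpq)].
      intros x R. right. rewrite Ropp_involutive. exact R. }
    replace p with (- f t) in * by lra. replace q with (- f r) in * by lra.
    exact (proj2 (ladder_steps_homotopic t r ht hl1t) hpq).
Qed.

Lemma two_ladders_cut_set : homotopy_cut_set a b alpha beta two_ladders.
Proof.
  pose proof (A_cut l1) as [_ [_ [Hnd [_ [_ [Hagree _]]]]]].
  split; [|split; [|split; [|split; [|split; [|split]]]]].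
  - intros x Tx. exact (two_ladders_bounds x Tx).
  - exact two_ladders_closed.
  - exact (nowhere_dense_sub _ _ two_ladders_sub Hnd).
  - left. left. reflexivity.
  - right. left. reflexivity.
  - intros x Tx. exact (Hagree x (two_ladders_sub x Tx)).
  - exact two_ladders_gap_homotopic.
Qed.
End TwoLadders.

Lemma intersection_gap_homotopic a b :
  I_comp (fun x => forall l, A l x) a b -> path_homotopic a b alpha beta.
Proof.
  intros [Aa [Ab [hab Hnone]]].
  assert (nmid : ~ forall l, A l ((a + b) / 2)) by (apply Hnone; lra).
  apply not_all_ex_not in nmid as [l1 hl1].
  destruct (closed_gap_around (A l1) a b ((a + b) / 2)) as [a0 [b0 [Hmid [ha0 hb0]]]];
    [exact (tower_closed HA l1)|exact (Aa l1)|exact (Ab l1)|lra|exact hl1|].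
  pose proof Hmid as [Aa0 [Ab0 _]].
  destruct (last_points_exist A a a0 l1) as [e [He Ee]];
    [exact HA|exact Aa|lra|exact Aa0|intros x Hx h1 h2; apply (Hnone x); [lra|exact Hx]|].
  destruct (last_points_exist (fun n x => A n (- x)) (- b) (- b0) l1) as [f [Hf Ef]];
    [exact (decreasing_tower_opp A HA)|intro n; rewrite Ropp_involutive; exact (Ab n)|lra
    |rewrite Ropp_involutive; exact Ab0|intros x Hx h1 h2; apply (Hnone (- x)); [lra|exact Hx]|].
  assert (Hmid' : I_comp (A l1) (e l1) (- f l1))
    by (rewrite Ee, Ef, Ropp_involutive; exact Hmid).
  pose proof (A_cut l1) as [Hbounds _].
  pose proof (Hbounds a (Aa l1)). pose proof (Hbounds b (Ab l1)). unfold in_int in *.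
  apply (scattered_products_on alpha beta (two_ladders a b e f)); [exact W|exact hab| | | |].
  - apply (is_path_sub 0 1); [lra|lra|lra|exact alpha_path].
  - apply (is_path_sub 0 1); [lra|lra|lra|exact beta_path].
  - exact (two_ladders_scattered a b l1 e f He Hf Hmid').
  - exact (two_ladders_cut_set a b l1 e f He Hf Hmid').
Qed.
End IntersectionGaps.
End Ordinals.

Theorem mainTheorem17 (X : TopSpace) (I : Type) (lt : I -> I -> Prop)
  (alpha beta : R -> X) (A : I -> R -> Prop) :
  well_defined_scattered_products X ->
  countable_limit_ordinal I lt ->
  is_path 0 1 alpha -> is_path 0 1 beta ->
  (forall l, homotopy_cut_set 0 1 alpha beta (A l)) ->
  (forall l m, is_succ lt l m -> forall x, A m x -> A l x) ->
  (forall l, is_limit lt l -> forall x, A l x <-> (forall m, lt m l -> A m x)) ->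
  (forall l m, is_succ lt l m -> forall a b c d,
      I_comp (A m) c d -> I_comp (A l) a b -> c <= a -> b <= d ->
      (c < a -> path_homotopic c a alpha beta) /\
      (b < d -> path_homotopic b d alpha beta)) ->
  homotopy_cut_set 0 1 alpha beta (fun x => forall l, A l x).
Proof.
  intros W [irr [trans [total [wf [_ [[l0 _] _]]]]]] pa pb Hcut Asucc Alim succ_gaps.
  assert (HA : decreasing_tower I lt A).
  { apply decreasing_tower_intro; [exact total|exact wf| |exact Asucc|exact Alim].
    intro n. apply Hcut. }
  pose proof (Hcut l0) as [Hbounds [_ [Hnd [_ [_ [Hagree _]]]]]].
  split; [|split; [|split; [|split; [|split; [|split]]]]].
  - intros x Hx. exact (Hbounds x (Hx l0)).
  - apply closed_set_inter. intro l. apply Hcut.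
  - exact (nowhere_dense_sub _ _ (fun x Hx => Hx l0) Hnd).
  - intro l. apply Hcut.
  - intro l. apply Hcut.
  - intros x Hx. exact (Hagree x (Hx l0)).
  - exact (intersection_gap_homotopic I lt irr trans total wf X alpha beta A
             W pa pb Hcut HA succ_gaps).
Qed.
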